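(* Let $U$ be a nonempty subset of $\mathbb{Q}[[t]]$ and let $\mathbf{g}=(g_i(t))_{i=0}^\infty$ be any sequence of elements of $U$ (repetitions allowed). Then for each $n\ge1$, $$\sum_{k=1}^n\alpha_k(U,\mathbf{g})\ge\sum_{k=1}^n\alpha_k(U),$$ where $\alpha_k(U,\mathbf{g}):=\sum_{j=0}^{k-1}\operatorname{ord}_t(g_k(t)-g_j(t))$. Moreover, given a fixed $N\ge1$, equality holds for all $0\le n\le N$ whenever $(g_i(t))_{i=0}^N$ is the initial part of a $t$-ordering of $U$.
   Context: $\mathbb{Q}[[t]]$ is the ring of formal power series over $\mathbb{Q}$, and $\operatorname{ord}_t(f)$ is the largest $\alpha\in\mathbb{N}$ with $t^\alpha\mid f$, $\operatorname{ord}_t(0)=+\infty$. For nonempty $U\subseteq\mathbb{Q}[[t]]$, a $t$-ordering of $U$ is a sequence $(f_i(t))_{i\ge0}$ of elements of $U$ where $f_0\in U$ is arbitrary and for each $k\ge1$, $f_k$ minimizes $\sum_{j=0}^{k-1}\operatorname{ord}_t(f_k(t)-f_j(t))$ over elements of $U$. The $t$-exponent sequence of $U$ is $\alpha_k(U):=\sum_{j=0}^{k-1}\operatorname{ord}_t(f_k(t)-f_j(t))$ for any $t$-ordering of $U$; this value does not depend on the choice of $t$-ordering. *)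

From Stdlib Require Import ClassicalEpsilon.
From mathcomp Require Import all_boot all_order all_algebra.
Set Implicit Arguments. Unset Strict Implicit. Unset Printing Implicit Defensive.
Import Order.TTheory GRing.Theory Num.Theory.

(* Formal power series over Q, as coefficient sequences: f = sum_i f i * t^i. *)
Definition pser := nat -> rat.

Definition psub (f g : pser) : pser := fun i => (f i - g i)%R.

Inductive enat := Fin of nat | Inf.

Definition eadd (a b : enat) : enat :=
  match a, b with Fin m, Fin n => Fin (m + n) | _, _ => Inf end.

Definition ele (a b : enat) : Prop :=
  match a, b with
  | _, Inf => True
  | Inf, Fin _ => False
  | Fin m, Fin n => (m <= n)%N
  end.

Definition tdvd (a : nat) (f : pser) : Prop := forall i, (i < a)%N -> f i = 0%R.

Definition ord_t (f : pser) : enat :=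
  match excluded_middle_informative (exists i, f i != 0%R) with
  | left H => Fin (ex_minn H)
  | right _ => Inf
  end.

Definition alpha_seq (g : nat -> pser) (k : nat) : enat :=
  \big[eadd/Fin 0]_(0 <= j < k) ord_t (psub (g k) (g j)).

Definition alpha_cand (g : nat -> pser) (k : nat) (u : pser) : enat :=
  \big[eadd/Fin 0]_(0 <= j < k) ord_t (psub u (g j)).

Definition is_t_ordering (U : pser -> Prop) (f : nat -> pser) : Prop :=
  (forall i, U (f i)) /\
  (forall k, (1 <= k)%N -> forall u, U u -> ele (alpha_seq f k) (alpha_cand f k u)).

Definition sum_alpha (g : nat -> pser) (n : nat) : enat :=
  \big[eadd/Fin 0]_(1 <= k < n.+1) alpha_seq g k.

(* The t-adic valuation vt f g := ord_t (f - g) is symmetric and ultrametric,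
   and sum_{k=1}^n alpha_k(U, g) is the sum of vt over all pairs among
   g_0, ..., g_n, hence invariant under permutations.  Given n+1 points of U
   and the first n points of a t-ordering, the ultrametric inequality lets us
   pick one of the n+1 points whose valuations to the remaining n points
   dominate, in total, its valuations to the t-ordering prefix; as the next
   term of the t-ordering minimizes the latter, induction on n yields the
   inequality.  Equality for two t-orderings follows by antisymmetry. *)

From HB Require Import structures.
From mathcomp Require Import all_boot all_order all_algebra.
From mathcomp Require Import zify.
From Stdlib Require Import ClassicalEpsilon Permutation.
Import GRing.Theory.
Set Implicit Arguments. Unset Strict Implicit.

Lemma eaddA : associative eadd. Proof. by case=> [a|] [b|] [c|] //=; rewrite addnA. Qed.
Lemma eaddC : commutative eadd. Proof. by case=> [a|] [b|] //=; rewrite addnC. Qed.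
Lemma add0e : left_id (Fin 0) eadd. Proof. by case. Qed.
HB.instance Definition _ := Monoid.isComLaw.Build enat (Fin 0) eadd eaddA eaddC add0e.

Lemma ele_refl e : ele e e. Proof. by case: e => //= ?. Qed.

Lemma ele_trans a b c : ele a b -> ele b c -> ele a c.
Proof. by case: a => [a|]; case: b => [b|]; case: c => [c|] //=; lia. Qed.
Arguments ele_trans {a b c}.

Lemma ele_total a b : ele a b \/ ele b a.
Proof. by case: a => [a|]; case: b => [b|] /=; auto; lia. Qed.

Lemma ele_anti a b : ele a b -> ele b a -> a = b.
Proof. by case: a => [a|]; case: b => [b|] //= ? ?; congr Fin; lia. Qed.

Lemma ele0e e : ele (Fin 0) e. Proof. by case: e. Qed.

Lemma ele_eadd a b c d : ele a b -> ele c d -> ele (eadd a c) (eadd b d).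
Proof. by case: a => [a|]; case: b => [b|]; case: c => [c|]; case: d => [d|] //=; lia. Qed.

Lemma ele_Fin_ind a b : (forall d, ele (Fin d) a -> ele (Fin d) b) -> ele a b.
Proof.
case: a => [m|] le_Fin; first exact: le_Fin m (leqnn m).
case: b le_Fin => [n|] // le_Fin.
by have /= := le_Fin n.+1 I; lia.
Qed.

Lemma Permutation_size (T : Type) (l l' : seq T) : Permutation l l' -> size l = size l'.
Proof. exact: Permutation_length. Qed.

Section UltrametricPairSums.

Variables (T : Type) (v : T -> T -> enat).
Hypothesis v_sym : forall x y, v x y = v y x.
Hypothesis v_ultra : forall e x y z, ele e (v x y) -> ele e (v y z) -> ele e (v x z).

Lemma v_ultra_swap a x y : ele (v a x) (v a y) -> ele (v x a) (v x y).
Proof.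
by move=> le_ax_ay; apply: (v_ultra (ele_refl _)); rewrite v_sym.
Qed.

Definition vsum (x : T) (l : seq T) : enat := \big[eadd/Fin 0]_(y <- l) v x y.

Fixpoint pairsum (l : seq T) : enat :=
  if l is x :: r then eadd (vsum x r) (pairsum r) else Fin 0.

Lemma vsum_perm x l l' : Permutation l l' -> vsum x l = vsum x l'.
Proof.
rewrite /vsum; elim=> [|y l1 l2 _ IH|y z l0|l1 l2 l3 _ -> _ ->] //.
  by rewrite !big_cons IH.
by rewrite !big_cons Monoid.mulmCA.
Qed.

Lemma pairsum_perm l l' : Permutation l l' -> pairsum l = pairsum l'.
Proof.
elim=> [|x l1 l2 perm12 /= ->|x y l0|l1 l2 l3 _ -> _ ->] //=.
  by rewrite (vsum_perm _ perm12).
rewrite /vsum !big_cons v_sym -!eaddA; congr eadd.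
by rewrite !eaddA (eaddC (vsum x l0)).
Qed.

Lemma pairsum_rcons l x : pairsum (rcons l x) = eadd (vsum x l) (pairsum l).
Proof. by rewrite -cats1 -(pairsum_perm (Permutation_cons_append l x)). Qed.

Lemma exists_closest a z l : exists y r, Permutation (z :: l) (y :: r) /\
  List.Forall (fun w => ele (v a w) (v a y)) r.
Proof.
elim: l z => [|w l IH] z; first by exists z, [::]; split; [exact: Permutation_refl|].
have [y [r [perm_wl close_y]]] := IH w.
have [le_zy|le_yz] := ele_total (v a z) (v a y).
  exists y, (z :: r); split; last by constructor.
  exact: perm_trans (perm_skip z perm_wl) (perm_swap _ _ _).
exists z, (y :: r); split; first exact: perm_skip.
constructor => //; apply: List.Forall_impl close_y => x le_xy.
exact: ele_trans le_xy le_yz.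
Qed.

(* Set aside an element [y] of [l] closest to the head [a] of [A] (largest
   [v a y]) and recurse; for the element [x] found, [v x a <= v x y] by the
   ultrametric inequality. *)
Lemma exists_vsum_dominated A l : size l = (size A).+1 ->
  exists x r, Permutation l (x :: r) /\ ele (vsum x A) (vsum x r).
Proof.
elim: A l => [|a A IH] [|z l] //=.
  case: l => [_|? ? //]; exists z, [::].
  by split; [exact: Permutation_refl | exact: ele_refl].
move=> [size_l].
have [y [r1 [perm_zl close_y]]] := exists_closest a z l.
have size_r1 : size r1 = (size A).+1.
  by have /= [<-] := Permutation_size perm_zl.
have [x [r [perm_r1 dom_x]]] := IH r1 size_r1.
exists x, (y :: r); split.
  exact: perm_trans perm_zl (perm_trans (perm_skip y perm_r1) (perm_swap _ _ _)).
rewrite /vsum !big_cons; apply: ele_eadd dom_x; apply: v_ultra_swap.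
exact: List.Forall_inv (Permutation_Forall perm_r1 close_y).
Qed.

Definition greedy (P : T -> Prop) (f : nat -> T) : Prop :=
  forall k, (0 < k)%N -> forall u, P u ->
    ele (vsum (f k) (mkseq f k)) (vsum u (mkseq f k)).

Lemma greedy_pairsum_min P f n l : greedy P f -> List.Forall P l ->
  size l = n.+1 -> ele (pairsum (mkseq f n.+1)) (pairsum l).
Proof.
move=> greedy_f; elim: n l => [|n IH] l Pl size_l.
  by rewrite /= /vsum big_nil; exact: ele0e.
have [|x [r [perm_l dom_x]]] := exists_vsum_dominated (A := mkseq f n.+1) (l := l).
  by rewrite size_mkseq.
have P_xr := Permutation_Forall perm_l Pl.
have [Px Pr] := (List.Forall_inv P_xr, List.Forall_inv_tail P_xr).
rewrite (pairsum_perm perm_l) mkseqS pairsum_rcons.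
apply: ele_eadd; first exact: ele_trans (greedy_f n.+1 isT x Px) dom_x.
apply: IH Pr _; have /= := Permutation_size perm_l.
by rewrite size_l => -[].
Qed.

End UltrametricPairSums.

Lemma tdvd_ord_t d f : tdvd d f <-> ele (Fin d) (ord_t f).
Proof.
rewrite /ord_t; case: excluded_middle_informative => [ex_nz|no_nz] /=.
  case: ex_minnP => m fm_nz m_min; split => [fd0|fd i lt_id].
    by rewrite leqNgt; apply/negP => /fd0 fm0; rewrite fm0 eqxx in fm_nz.
  by apply/eqP; apply: contraT => /m_min; lia.
split=> // _ i _; apply/eqP; apply: contraT => fi_nz.
by case: no_nz; exists i.
Qed.

Definition vt (f g : pser) : enat := ord_t (psub f g).

Lemma tdvd_psub_trans d f g h :
  tdvd d (psub f g) -> tdvd d (psub g h) -> tdvd d (psub f h).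
Proof.
rewrite /tdvd /psub => fg gh i lt_id.
by rewrite -(subrKA (g i)) fg // gh // addr0.
Qed.

Lemma vt_ultra e f g h : ele e (vt f g) -> ele e (vt g h) -> ele e (vt f h).
Proof.
move=> le_fg le_gh; apply: ele_Fin_ind => d le_de; apply/tdvd_ord_t.
apply: (@tdvd_psub_trans _ _ g); apply/tdvd_ord_t; exact: ele_trans le_de _.
Qed.

Lemma vt_sym f g : vt f g = vt g f.
Proof.
suff le_vt f' g' : ele (vt f' g') (vt g' f') by apply: ele_anti.
apply: ele_Fin_ind => d /tdvd_ord_t fg; apply/tdvd_ord_t => i lt_id.
by rewrite /psub -opprB; have := fg i lt_id; rewrite /psub => ->; rewrite oppr0.
Qed.

Lemma alpha_cand_vsum f k u : alpha_cand f k u = vsum vt u (mkseq f k).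
Proof. by rewrite /vsum big_map /alpha_cand /index_iota subn0. Qed.

Lemma t_ordering_greedy U f : is_t_ordering U f -> greedy vt U f.
Proof. by move=> [_ f_min] k k_gt0 u Uu; rewrite -!alpha_cand_vsum; apply: f_min. Qed.

Lemma sum_alpha_pairsum g n : sum_alpha g n = pairsum vt (mkseq g n.+1).
Proof.
elim: n => [|n IH]; first by rewrite /sum_alpha big_geq // /= /vsum big_nil.
rewrite /sum_alpha big_nat_recr // -/(sum_alpha g n) IH (mkseqS g n.+1).
by rewrite (pairsum_rcons vt_sym) -alpha_cand_vsum; apply: eaddC.
Qed.

Lemma Forall_mkseq (T : Type) (P : T -> Prop) g n :
  (forall i, P (g i)) -> List.Forall P (mkseq g n).
Proof. by move=> Pg; rewrite /mkseq; elim: (iota 0 n) => //= i s IH; constructor. Qed.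

Lemma t_ordering_sum_alpha_min U f g : is_t_ordering U f -> (forall i, U (g i)) ->
  forall n, ele (sum_alpha f n) (sum_alpha g n).
Proof.
move=> f_ord Ug n; rewrite !sum_alpha_pairsum.
apply: (greedy_pairsum_min vt_sym vt_ultra (t_ordering_greedy f_ord)).
  exact: Forall_mkseq.
exact: size_mkseq.
Qed.

Lemma sum_alpha_eq f g n : (forall i, (i <= n)%N -> f i = g i) ->
  sum_alpha f n = sum_alpha g n.
Proof.
move=> fg; rewrite !sum_alpha_pairsum; congr pairsum.
by apply/eq_in_map => i; rewrite mem_iota => /andP[_ lt_in]; apply: fg.
Qed.

Theorem theorem4p10 (U : pser -> Prop) (HU : exists u, U u)
    (g : nat -> pser) (Hg : forall i, U (g i)) :
  (forall f, is_t_ordering U f ->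
     forall n, (1 <= n)%N -> ele (sum_alpha f n) (sum_alpha g n)) /\
  (forall N, (1 <= N)%N ->
     (exists f, is_t_ordering U f /\ forall i, (i <= N)%N -> f i = g i) ->
     forall h, is_t_ordering U h ->
       forall n, (n <= N)%N -> sum_alpha g n = sum_alpha h n).
Proof.
split=> [f f_ord n _ | N _ [f [f_ord fg]] h h_ord n le_nN].
  exact: t_ordering_sum_alpha_min f_ord Hg n.
rewrite -(@sum_alpha_eq f g n); last by move=> i le_in; apply: fg; lia.
apply: ele_anti.
  exact: t_ordering_sum_alpha_min f_ord (proj1 h_ord) n.
exact: t_ordering_sum_alpha_min h_ord (proj1 f_ord) n.
Qed.
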